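(* Let $H$ be a Hilbert space, let $T$ be a densely defined closed operator on $H$ with closed range, and let $S\in B(H)$ be an EP operator. If $R(S)=R(T)$, then $w(ST)=w(S)w(T)$.
   Context: $B(H)$ is the set of bounded operators on $H$. A densely defined closed operator $A$ on $H$ is EP if $R(A)$ is closed and $R(A)=R(A^{*})$. For a densely defined closed operator $A$ with closed range, $C(A)=D(A)\cap N(A)^{\perp}$, and the Moore–Penrose inverse $A^{\dagger}$ is defined on $R(A)\oplus^{\perp}R(A)^{\perp}$ by $A^{\dagger}y=(A|_{C(A)})^{-1}y$ for $y\in R(A)$ and $A^{\dagger}y=0$ for $y\in R(A)^{\perp}$. The generalized Cauchy dual is $w(A)=A(A^{*}A)^{\dagger}$ (products on natural domains). *)

From HB Require Import structures.
From mathcomp Require Import all_boot all_order all_algebra.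
From mathcomp Require Import reals complex.
From Stdlib Require Import ClassicalEpsilon.

Set Implicit Arguments.
Unset Strict Implicit.
Unset Printing Implicit Defensive.

Import Order.TTheory GRing.Theory Num.Theory.
Local Open Scope ring_scope.
Local Open Scope complex_scope.

Section Hilbert.
Variables (R : realType) (H : lmodType R[i]) (ip : H -> H -> R[i]).

Definition is_inner_product : Prop :=
  [/\ (forall (a : R[i]) (x y z : H), ip (a *: x + y) z = a * ip x z + ip y z),
      (forall x y : H, ip y x = (ip x y)^*),
      (forall x : H, 0 <= complex.Re (ip x x)) &
      (forall x : H, ip x x = 0 -> x = 0)].

Definition hnorm (x : H) : R := Num.sqrt (complex.Re (ip x x)).

Definition seq_cvg (u : nat -> H) (x : H) : Prop :=
  forall e : R, 0 < e -> exists N : nat, forall n, (N <= n)%N -> hnorm (u n - x) < e.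

Definition cauchy_seq (u : nat -> H) : Prop :=
  forall e : R, 0 < e -> exists N : nat, forall m n, (N <= m)%N -> (N <= n)%N ->
    hnorm (u m - u n) < e.

Definition complete_ip : Prop :=
  forall u, cauchy_seq u -> exists x, seq_cvg u x.

Definition is_Hilbert : Prop := is_inner_product /\ complete_ip.

Definition closed_set (S : H -> Prop) : Prop :=
  forall u x, (forall n, S (u n)) -> seq_cvg u x -> S x.

Definition dense_set (S : H -> Prop) : Prop :=
  forall x, exists u, (forall n, S (u n)) /\ seq_cvg u x.

Definition subspace (S : H -> Prop) : Prop :=
  S 0 /\ forall (a : R[i]) x y, S x -> S y -> S (a *: x + y).

Definition orth (S : H -> Prop) : H -> Prop :=
  fun x => forall y, S y -> ip y x = 0.

Definition set_eq (S1 S2 : H -> Prop) : Prop := forall x, S1 x <-> S2 x.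

(** (possibly unbounded) operators: a domain and an action on it;
    values outside the domain are irrelevant. *)
Record op := Op { dom : H -> Prop; app : H -> H }.

Definition op_eq (A B : op) : Prop :=
  (forall x, dom A x <-> dom B x) /\ (forall x, dom A x -> app A x = app B x).

Definition linear_op (A : op) : Prop :=
  subspace (dom A) /\
  forall (a : R[i]) x y, dom A x -> dom A y -> app A (a *: x + y) = a *: app A x + app A y.

Definition op_range (A : op) : H -> Prop := fun y => exists x, dom A x /\ app A x = y.
Definition kernel (A : op) : H -> Prop := fun x => dom A x /\ app A x = 0.

Definition densely_defined (A : op) : Prop := linear_op A /\ dense_set (dom A).

Definition closed_op (A : op) : Prop :=
  forall u x y, (forall n, dom A (u n)) -> seq_cvg u x -> seq_cvg (fun n => app A (u n)) y ->
    dom A x /\ app A x = y.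

Definition closed_range (A : op) : Prop := closed_set (op_range A).

Definition bounded_op (A : op) : Prop :=
  (forall x, dom A x) /\ linear_op A /\
  exists M : R, forall x, hnorm (app A x) <= M * hnorm x.

Definition adj_dom (A : op) : H -> Prop :=
  fun y => exists z, forall x, dom A x -> ip (app A x) y = ip x z.

Definition adjoint (A : op) : op :=
  Op (adj_dom A)
     (fun y => epsilon (inhabits (0 : H))
                 (fun z => forall x, dom A x -> ip (app A x) y = ip x z)).

Definition EP (A : op) : Prop :=
  closed_range A /\ set_eq (op_range A) (op_range (adjoint A)).

Definition op_comp (A B : op) : op :=
  Op (fun x => dom B x /\ dom A (app B x)) (fun x => app A (app B x)).

Definition coim (A : op) : H -> Prop := fun x => dom A x /\ orth (kernel A) x.

(** Moore--Penrose inverse: defined on R(A) ⊕ R(A)^⊥, with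
    A^† (A x + y2) = x for x ∈ C(A), y2 ∈ R(A)^⊥. *)
Definition mp_inv (A : op) : op :=
  Op (fun y => exists y1 y2, op_range A y1 /\ orth (op_range A) y2 /\ y = y1 + y2)
     (fun y => epsilon (inhabits (0 : H))
                 (fun x => exists y2, coim A x /\ orth (op_range A) y2 /\ y = app A x + y2)).

(** generalized Cauchy dual  w(A) = A (A^* A)^† *)
Definition cdual (A : op) : op := op_comp A (mp_inv (op_comp (adjoint A) A)).

End Hilbert.

From mathcomp Require Import all_boot all_order all_algebra.
From mathcomp Require Import reals complex.
From mathcomp Require Import ring lra.
From mathcomp Require Import classical_sets.
From Stdlib Require Import ClassicalEpsilon.

Set Implicit Arguments.
Unset Strict Implicit.
Unset Printing Implicit Defensive.

Import Order.TTheory GRing.Theory Num.Theory.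
Local Open Scope ring_scope.
Local Open Scope complex_scope.

(* Let [M = R(S) = R(S^* ) = R(T)], a closed subspace.  Both [S] and [S^*] vanish
   on [M^⊥], so they map [M] onto itself, and [(ST)^* = T^* S^*] since [S] is
   bounded.  Hence [(ST)^*(ST)] and [T^*T] have the same range, so for
   [u = ((ST)^*(ST))^† y] and [v = (T^*T)^† y] we get [T^*(S^*S Tu) = T^*T v].
   As [S^*S Tu] lies in [R(T)] and [T^*T] determines [T] on its domain, this gives
   [S^*S (Tu) = Tv = S^*S p] for [p = (S^*S)^† (Tv)], and then [STu = Sp], that is
   [w(ST) y = w(S) w(T) y].  The domains agree for the same reasons. *)

Section InnerProduct.
Variables (R : realType) (H : lmodType R[i]) (ip : H -> H -> R[i]).
Hypothesis hip : is_inner_product ip.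

Local Notation nsq x := (complex.Re (ip x x)).

Lemma ipC x y : ip y x = (ip x y)^*.
Proof. by case: hip. Qed.

Lemma ipLl a x y z : ip (a *: x + y) z = a * ip x z + ip y z.
Proof. by case: hip. Qed.

Lemma ip0l z : ip 0 z = 0.
Proof.
have := ipLl 1 0 0 z; rewrite scaler0 addr0 mul1r -{1}[ip 0 z]addr0.
by move/addrI/esym.
Qed.

Lemma ipDl x y z : ip (x + y) z = ip x z + ip y z.
Proof. by rewrite -(scale1r x) ipLl mul1r scale1r. Qed.

Lemma ipZl a x z : ip (a *: x) z = a * ip x z.
Proof. by rewrite -(addr0 (a *: x)) ipLl ip0l addr0. Qed.

Lemma ipNl x z : ip (- x) z = - ip x z.
Proof. by rewrite -scaleN1r ipZl mulN1r. Qed.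

Lemma ipBl x y z : ip (x - y) z = ip x z - ip y z.
Proof. by rewrite ipDl ipNl. Qed.

Lemma ip0r z : ip z 0 = 0.
Proof. by rewrite ipC ip0l rmorph0. Qed.

Lemma ipDr x y z : ip z (x + y) = ip z x + ip z y.
Proof. by rewrite [ip z x]ipC [ip z y]ipC ipC ipDl rmorphD. Qed.

Lemma ipZr a x z : ip z (a *: x) = a^* * ip z x.
Proof. by rewrite [ip z x]ipC ipC ipZl rmorphM. Qed.

Lemma ipNr x z : ip z (- x) = - ip z x.
Proof. by rewrite [ip z x]ipC ipC ipNl rmorphN. Qed.

Lemma ipBr x y z : ip z (x - y) = ip z x - ip z y.
Proof. by rewrite ipDr ipNr. Qed.

Definition ipE := (ipDl, ipDr, ipBl, ipBr, ipNl, ipNr, ipZl, ipZr, ip0l, ip0r).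

Lemma ip_eq0 x : ip x x = 0 -> x = 0.
Proof. by case: hip => _ _ _; apply. Qed.

Lemma nsq_ge0 x : 0 <= nsq x.
Proof. by case: hip => _ _ + _; apply. Qed.

Lemma ipxx_real x : ip x x = (nsq x)%:C.
Proof. by have := ipC x x; case: (ip x x) => a b /= [] hb; congr Complex; lra. Qed.

Lemma nsq_eq0 x : nsq x = 0 -> x = 0.
Proof. by move=> h; apply: ip_eq0; rewrite ipxx_real h. Qed.

Lemma Re_ipC x y : complex.Re (ip y x) = complex.Re (ip x y).
Proof. by rewrite ipC; case: (ip x y). Qed.

Lemma ReD (a b : R[i]) : complex.Re (a + b) = complex.Re a + complex.Re b.
Proof. by case: a; case: b. Qed.

Lemma ReN (a : R[i]) : complex.Re (- a) = - complex.Re a.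
Proof. by case: a. Qed.

Lemma ReMc (r : R) (a : R[i]) : complex.Re (r%:C * a) = r * complex.Re a.
Proof. by case: a => x y /=; ring. Qed.

Lemma nsqB x y : nsq (x - y) = nsq x + nsq y - 2 * complex.Re (ip x y).
Proof. by rewrite !ipE !(ReD, ReN) (Re_ipC x y); ring. Qed.

Lemma nsqD x y : nsq (x + y) = nsq x + nsq y + 2 * complex.Re (ip x y).
Proof. by rewrite !ipE !ReD (Re_ipC x y); ring. Qed.

Lemma nsqN x : nsq (- x) = nsq x.
Proof. by rewrite ipNl ipNr opprK. Qed.

Lemma nsqZ (r : R) x : nsq (r%:C *: x) = r ^+ 2 * nsq x.
Proof. by rewrite !ipE; case: (ip x x) => a b /=; ring. Qed.

(* Young's inequality, from [0 <= nsq (s x - y)]. *)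
Lemma Re_ip_le x y (s : R) : 0 < s ->
  2 * complex.Re (ip x y) <= s * nsq x + s^-1 * nsq y.
Proof.
move=> s_gt0; have := nsq_ge0 (s%:C *: x - y); rewrite nsqB nsqZ ipZl ReMc => h.
rewrite -(ler_pM2l s_gt0) mulrDr !mulrA mulfV ?gt_eqF // mul1r -expr2.
lra.
Qed.


Lemma nsqD_le x y s : 0 < s -> nsq (x + y) <= (1 + s) * nsq x + (1 + s^-1) * nsq y.
Proof. by move=> s_gt0; rewrite nsqD; have := Re_ip_le x y s_gt0; lra. Qed.

Local Notation sqmod c := (complex.Re c ^+ 2 + complex.Im c ^+ 2).

Lemma sqmod_le0 (c : R[i]) : sqmod c <= 0 -> c = 0.
Proof.
case: c => a b /= h.
have a0 : a = 0 by nra.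
have b0 : b = 0 by nra.
by rewrite a0 b0.
Qed.

Lemma nsq_sub_proj w z : 0 < nsq z ->
  nsq (w - ((nsq z)^-1%:C * ip w z) *: z) = nsq w - (nsq z)^-1 * sqmod (ip w z).
Proof.
move=> z_gt0; rewrite !ipE [ip z w]ipC [ip z z]ipxx_real.
move: (ip w z) (ip w w) => [a b] [c d] /=.
by field; rewrite gt_eqF.
Qed.

Lemma ip_CS x y : sqmod (ip x y) <= nsq x * nsq y.
Proof.
have [y0|y_gt0] := eqVneq (nsq y) 0.
  by rewrite y0 mulr0 (nsq_eq0 y0) ip0r /= expr0n addr0.
have {}y_gt0 : 0 < nsq y by rewrite lt_def y_gt0 nsq_ge0.
have := nsq_ge0 (x - ((nsq y)^-1%:C * ip x y) *: y).
rewrite nsq_sub_proj // subr_ge0 => h.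
by rewrite -ler_pdivrMr // mulrC.
Qed.

Lemma hnorm_lt x e : 0 < e -> (hnorm ip x < e) = (nsq x < e ^+ 2).
Proof.
move=> e_gt0; rewrite /hnorm -(ltr_sqrt (nsq x)) ?exprn_gt0 // sqrtr_sqr.
by rewrite ger0_norm ?ltW.
Qed.

Lemma nsq_small_eq0 x : (forall e, 0 < e -> nsq x < e) -> x = 0.
Proof.
move=> small; apply: nsq_eq0; apply/eqP; rewrite eq_le nsq_ge0 andbT leNgt.
by apply/negP => /small; rewrite ltxx.
Qed.

Lemma cvg_nsq_small u x (e : R) : seq_cvg ip u x -> 0 < e ->
  exists N, forall n, (N <= n)%N -> nsq (u n - x) < e.
Proof.
move=> ux e_gt0; have [|N uN] := ux (Num.sqrt e); first by rewrite sqrtr_gt0.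
by exists N => n /uN; rewrite hnorm_lt ?sqrtr_gt0 // sqr_sqrtr ?ltW.
Qed.

Lemma invSn_small (e : R) : 0 < e -> exists N, forall n, (N <= n)%N -> (n.+1%:R : R)^-1 < e.
Proof.
move=> e_gt0; exists (Num.Def.archi_bound e^-1) => n le_Nn.
rewrite -[e]invrK ltf_pV2 ?posrE ?invr_gt0 ?ltr0n //.
apply: (lt_le_trans (archi_boundP _)); first by rewrite invr_ge0 ltW.
by rewrite ler_nat (leq_trans le_Nn).
Qed.

Lemma parallelogram x z : nsq (x + z) + nsq (x - z) = 2 * nsq x + 2 * nsq z.
Proof. by rewrite nsqD nsqB; lra. Qed.

Section Projection.
Variable K : H -> Prop.
Hypothesis K_sub : subspace K.

Lemma subspaceD x y : K x -> K y -> K (x + y).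
Proof. by case: K_sub => _ KL Kx Ky; rewrite -(scale1r x); apply: KL. Qed.

Lemma subspaceZ a x : K x -> K (a *: x).
Proof. by case: K_sub => K0 KL Kx; rewrite -(addr0 (a *: x)); apply: KL. Qed.

Lemma minimizer_orth y k : K k -> (forall k', K k' -> nsq (y - k) <= nsq (y - k')) ->
  orth ip K (y - k).
Proof.
move=> Kk k_min z Kz; have [z0|z_neq0] := eqVneq (nsq z) 0.
  by rewrite (nsq_eq0 z0) ip0l.
have z_gt0 : 0 < nsq z by rewrite lt_def z_neq0 nsq_ge0.
set w := y - k; set c := ip w z.
have := k_min (k + ((nsq z)^-1%:C * c) *: z) (subspaceD Kk (subspaceZ _ Kz)).
rewrite opprD addrA -/w nsq_sub_proj // -subr_ge0 addrAC subrr add0r.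
rewrite oppr_ge0 pmulr_rle0 ?invr_gt0 // => c_le0.
by rewrite ipC; move/sqmod_le0: c_le0 => ->; rewrite rmorph0.
Qed.

Lemma nsq_near_minimizers y d a b : (forall k, K k -> d <= nsq (y - k)) -> K a -> K b ->
  nsq (a - b) <= 2 * (nsq (y - a) - d) + 2 * (nsq (y - b) - d).
Proof.
move=> d_min Ka Kb; set m := (2^-1)%:C *: (a + b).
have := d_min m (subspaceZ _ (subspaceD Ka Kb)).
have := parallelogram (y - a) (y - b).
have -> : y - a + (y - b) = 2%:C *: (y - m).
  rewrite scalerBr scalerA -rmorphM divff ?pnatr_eq0 // scale1r rmorph_nat scaler_nat.
  by rewrite addrACA -opprD mulr2n.
have -> : y - a - (y - b) = - (a - b).
  by rewrite !opprB addrC addrA subrK.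
by rewrite nsqZ nsqN; lra.
Qed.

Lemma minimizing_seq_cauchy y d ks : (forall k, K k -> d <= nsq (y - k)) ->
  (forall n, K (ks n)) -> (forall n, nsq (y - ks n) < d + (n.+1%:R : R)^-1) ->
  cauchy_seq ip ks.
Proof.
move=> d_min Kks near_d e e_gt0; have [|N small_N] := @invSn_small (e ^+ 2 / 4).
  by rewrite divr_gt0 // exprn_gt0.
exists N => m n le_Nm le_Nn; rewrite hnorm_lt //.
have := nsq_near_minimizers d_min (Kks m) (Kks n).
have := near_d m; have := near_d n; have := small_N m le_Nm; have := small_N n le_Nn.
move: (m.+1%:R : R)^-1 (n.+1%:R : R)^-1 => p q; lra.
Qed.

End Projection.

Lemma nsq_cvg_le y u k d : seq_cvg ip u k ->
  (forall e, 0 < e -> exists N, forall n, (N <= n)%N -> nsq (y - u n) <= d + e) ->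
  nsq (y - k) <= d.
Proof.
move=> uk near_d; apply/ler_addgt0Pr => eps eps_gt0.
have d4_gt0 : 0 < `|d| + 4 by rewrite ltr_wpDl.
pose t := Num.min 1 (eps / (`|d| + 4)).
have t_gt0 : 0 < t by rewrite lt_min ltr01 divr_gt0.
have t_le1 : t <= 1 by rewrite ge_min lexx.
have t_eps : t * (`|d| + 4) <= eps by rewrite -ler_pdivlMr // ge_min lexx orbT.
clearbody t; have [N1 near_N1] := near_d t t_gt0.
have [N2 cvg_N2] := cvg_nsq_small uk (exprn_gt0 2 t_gt0).
set n := maxn N1 N2.
have a_le := near_N1 n (leq_maxl _ _).
have b_lt := cvg_N2 n (leq_maxr _ _).
have := nsqD_le (y - u n) (u n - k) t_gt0; rewrite subrKA.
have near_le : (1 + t) * nsq (y - u n) <= (1 + t) * (d + t).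
  by apply: ler_wpM2l a_le; rewrite addr_ge0 // ltW.
have cvg_le : (1 + t^-1) * nsq (u n - k) <= t ^+ 2 + t.
  have -> : t ^+ 2 + t = (1 + t^-1) * t ^+ 2.
    by field; rewrite gt_eqF.
  by apply: ler_wpM2l (ltW b_lt); rewrite addr_ge0 // invr_ge0 ltW.
have td_le : t * d <= t * `|d| by apply: ler_wpM2l (ler_norm d); apply: ltW.
have t2_le : t ^+ 2 <= t by rewrite expr2; apply: ler_piMl => //; apply: ltW.
lra.
Qed.

Theorem orth_decomp (hc : complete_ip ip) K : subspace K -> closed_set ip K ->
  forall y, exists2 k, K k & orth ip K (y - k).
Proof.
move=> K_sub K_closed y.
pose D : set R := fun r => exists2 k, K k & r = nsq (y - k).
have D_lb : has_lbound D by exists 0 => _ [k _ ->]; apply: nsq_ge0.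
have d_min k : K k -> inf D <= nsq (y - k) by move=> Kk; apply: (ge_inf D_lb); exists k.
have D_ne : nonempty D by exists (nsq (y - 0)), 0 => //; case: K_sub.
have near_d n : exists k, K k /\ nsq (y - k) < inf D + (n.+1%:R : R)^-1.
  have : inf D < inf D + (n.+1%:R : R)^-1 by rewrite ltrDl invr_gt0 ltr0n.
  by case/(inf_lt D_ne) => _ [k Kk ->] ?; exists k.
pose ks n := epsilon (inhabits 0) (fun k => K k /\ nsq (y - k) < inf D + (n.+1%:R : R)^-1).
have ks_near n : K (ks n) /\ nsq (y - ks n) < inf D + (n.+1%:R : R)^-1.
  exact: epsilon_spec (near_d n).
have ks_cauchy : cauchy_seq ip ks.
  by apply: (minimizing_seq_cauchy K_sub d_min) => n; case: (ks_near n).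
have [k ks_k] := hc _ ks_cauchy.
have Kk : K k by apply: (K_closed ks) => // n; case: (ks_near n).
exists k => //; apply: minimizer_orth => // k' Kk'; apply: le_trans (d_min _ Kk').
apply: nsq_cvg_le ks_k _ => e /invSn_small [N small_N]; exists N => n /small_N.
by case: (ks_near n) => _; move: (n.+1%:R : R)^-1 => p; lra.
Qed.

Lemma orth_closed P : closed_set ip (orth ip P).
Proof.
move=> u x u_orth ux p Pp; apply: sqmod_le0; apply/ler_addgt0Pr => eps eps_gt0.
have p1_gt0 : 0 < nsq p + 1 by rewrite ltr_wpDl ?nsq_ge0.
have [|N small_N] := cvg_nsq_small ux (_ : 0 < eps / (nsq p + 1)); first exact: divr_gt0.
have -> : ip p x = ip p (x - u N) by rewrite ipBr (u_orth N p Pp) subr0.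
apply: le_trans (ip_CS _ _) _; rewrite add0r -[x - _]opprB nsqN.
apply: (@le_trans _ _ ((nsq p + 1) * (eps / (nsq p + 1)))).
  by rewrite ler_pM ?nsq_ge0 ?lerDl ?ltr01 ?ltW ?small_N.
by rewrite mulrC divfK ?lt0r_neq0.
Qed.

Theorem riesz (hc : complete_ip ip) (f : H -> R[i]) :
  (forall a x y, f (a *: x + y) = a * f x + f y) -> closed_set ip (fun x => f x = 0) ->
  exists z, forall x, f x = ip x z.
Proof.
move=> f_lin ker_closed.
have f0 : f 0 = 0.
  by have := f_lin 1 0 0; rewrite scaler0 addr0 mul1r -{1}[f 0]addr0 => /addrI/esym.
have fZ a x : f (a *: x) = a * f x by rewrite -[a *: x]addr0 f_lin f0 addr0.
have fB x y : f (x - y) = f x - f y by rewrite -scaleN1r addrC f_lin mulN1r addrC.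
have ker_sub : subspace (fun x => f x = 0).
  by split=> // a x y fx fy; rewrite f_lin fx fy mulr0 addr0.
case: (boolp.pselect (exists x, f x != 0)) => [[x0 fx0]|f_eq0]; last first.
  by exists 0 => x; rewrite ip0r; apply/eqP/negPn/negP => fx; apply: f_eq0; exists x.
have [k fk w_orth] := orth_decomp hc ker_sub ker_closed x0.
set w := x0 - k in w_orth.
have fw : f w = f x0 by rewrite fB fk subr0.
have w_neq0 : ip w w != 0.
  by apply: contra fx0; rewrite -fw => /eqP/ip_eq0 ->; rewrite f0.
have fw_neq0 : f w != 0 by rewrite fw.
exists ((f w / ip w w)^* *: w) => x.
have ip_xw : ip x w = f x / f w * ip w w.
  have := w_orth (x - (f x / f w) *: w); rewrite ipBl ipZl fB fZ divfK // subrr.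
  by move=> /(_ erefl)/eqP; rewrite subr_eq0 => /eqP.
by rewrite ipZr conjCK ip_xw; field; apply/andP.
Qed.

Lemma closed_set_eq P Q : set_eq P Q -> closed_set ip P -> closed_set ip Q.
Proof. by move=> PQ P_closed u x Qu ux; apply/PQ/(P_closed u) => // n; apply/PQ. Qed.

Lemma orth_eq P Q v : set_eq P Q -> orth ip P v -> orth ip Q v.
Proof. by move=> PQ Pv q /PQ; apply: Pv. Qed.

Lemma orth_decomp_unique M a b c d : M a -> M b -> orth ip M c -> orth ip M d ->
  a + c = b + d -> a = b.
Proof.
move=> Ma Mb Mc Md acbd.
have E : a - b = d - c by rewrite -(addrK c a) acbd [b + d]addrC addrAC addrK.
apply/eqP; rewrite -subr_eq0; apply/eqP/ip_eq0.
by rewrite {2}E !ipBl !ipBr (Mc _ Ma) (Md _ Ma) (Mc _ Mb) (Md _ Mb) !subrr.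
Qed.

Section LinearOp.
Variable A : op H.
Hypothesis A_lin : linear_op A.

Lemma dom0 : dom A 0.
Proof. by case: A_lin => [[]]. Qed.

Lemma domB x y : dom A x -> dom A y -> dom A (x - y).
Proof. by case: A_lin => [[_ domL] _] Ax Ay; rewrite addrC -scaleN1r; apply: domL. Qed.

Lemma appL a x y : dom A x -> dom A y -> app A (a *: x + y) = a *: app A x + app A y.
Proof. by case: A_lin => _; apply. Qed.

Lemma app0 : app A 0 = 0.
Proof.
have := appL 1 dom0 dom0; rewrite scaler0 addr0 scale1r -{1}[app A 0]addr0.
by move/addrI/esym.
Qed.

Lemma appB x y : dom A x -> dom A y -> app A (x - y) = app A x - app A y.
Proof. by move=> Ax Ay; rewrite addrC -scaleN1r appL // scaleN1r addrC. Qed.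

Lemma kernel_subspace : subspace (kernel A).
Proof.
split=> [|a x y [Ax Ax0] [Ay Ay0]]; first by split; [exact: dom0 | exact: app0].
have [[_ domL] _] := A_lin.
by split; [exact: domL | rewrite appL // Ax0 Ay0 scaler0 addr0].
Qed.

Lemma range_subspace : subspace (op_range A).
Proof.
have [[_ domL] _] := A_lin.
split=> [|a _ _ [x [Ax <-]] [y [Ay <-]]]; first by exists 0; split; [exact: dom0 | exact: app0].
by exists (a *: x + y); split; [exact: domL | exact: appL].
Qed.

End LinearOp.

Lemma closed_op_kernel_closed A : closed_op ip A -> closed_set ip (kernel A).
Proof.
move=> A_closed u x u_ker ux; apply: (A_closed u x 0) => // [n|e e_gt0].
  by case: (u_ker n).
exists 0%N => n _; rewrite (proj2 (u_ker n)) subrr hnorm_lt // ip0l.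
exact: exprn_gt0.
Qed.

Section BoundedOp.
Variable S : op H.
Hypothesis S_bounded : bounded_op ip S.

Lemma bounded_cvg u x : seq_cvg ip u x -> seq_cvg ip (fun n => app S (u n)) (app S x).
Proof.
have [S_dom [S_lin [M S_le]]] := S_bounded.
move=> ux e e_gt0; pose r := e / (`|M| + 1).
have M1_gt0 : 0 < `|M| + 1 by rewrite ltr_wpDl.
have [|N uN] := ux r; first exact: divr_gt0.
exists N => n /uN un_r; rewrite -appB //; apply: le_lt_trans (S_le _) _.
apply: (@le_lt_trans _ _ (`|M| * hnorm ip (u n - x))).
  by apply: ler_wpM2r (ler_norm M); apply: sqrtr_ge0.
apply: (@le_lt_trans _ _ (`|M| * r)); first by apply: ler_wpM2l => //; apply: ltW.
by rewrite /r mulrA ltr_pdivrMr // mulrDr mulr1 mulrC ltrDl.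
Qed.

Lemma bounded_kernel_closed : closed_set ip (kernel S).
Proof.
have [S_dom [S_lin _]] := S_bounded.
move=> u x u_ker ux; split=> //; apply: nsq_small_eq0 => e e_gt0.
have [N SuN] := cvg_nsq_small (bounded_cvg ux) e_gt0.
by have := SuN N (leqnn N); rewrite (proj2 (u_ker N)) sub0r nsqN.
Qed.

Lemma bounded_adj_dom (hc : complete_ip ip) y : adj_dom ip S y.
Proof.
have [S_dom [S_lin _]] := S_bounded.
have [|u x u_ker ux|z zP] := @riesz hc (fun x => ip (app S x) y); last by exists z.
  by move=> a x x'; rewrite appL // ipLl.
have Su_orth n : orth ip (eq y) (app S (u n)) by move=> _ <-; rewrite ipC u_ker rmorph0.
have /(_ y erefl) := orth_closed Su_orth (bounded_cvg ux).
by move=> /(congr1 (fun c => c^*)); rewrite -ipC rmorph0.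
Qed.

End BoundedOp.

Lemma adjointP A y : adj_dom ip A y ->
  forall x, dom A x -> ip (app A x) y = ip x (app (adjoint ip A) y).
Proof. by move=> Ay; apply: (epsilon_spec (inhabits 0) _ Ay). Qed.

Lemma dense_orth_eq0 D v : dense_set ip D -> (forall x, D x -> ip x v = 0) -> v = 0.
Proof.
move=> D_dense v_orth; have [u [Du uv]] := D_dense v.
apply: nsq_small_eq0 => e /(cvg_nsq_small uv) [N uN].
have := uN N (leqnn N); rewrite nsqB (v_orth _ (Du N)) /= mulr0 subr0.
by have := nsq_ge0 (u N); lra.
Qed.

Section Adjoint.
Variable A : op H.
Hypothesis A_dense : dense_set ip (dom A).

Lemma adjoint_eq y z : (forall x, dom A x -> ip (app A x) y = ip x z) ->
  adj_dom ip A y /\ app (adjoint ip A) y = z.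
Proof.
move=> zP; have Ay : adj_dom ip A y by exists z.
split=> //; apply/eqP; rewrite -subr_eq0; apply/eqP.
by apply: (dense_orth_eq0 A_dense) => x Ax; rewrite ipBr -adjointP // zP // subrr.
Qed.

Lemma adjointB y y' : adj_dom ip A y -> adj_dom ip A y' ->
  adj_dom ip A (y - y') /\
  app (adjoint ip A) (y - y') = app (adjoint ip A) y - app (adjoint ip A) y'.
Proof. by move=> Ay Ay'; apply: adjoint_eq => x Ax; rewrite !ipBr !adjointP. Qed.

Lemma adjoint0 : adj_dom ip A 0 /\ app (adjoint ip A) 0 = 0.
Proof. by apply: adjoint_eq => x _; rewrite !ip0r. Qed.

End Adjoint.

Local Notation gram A := (op_comp (adjoint ip A) A).

Section Gram.
Variable A : op H.
Hypotheses (A_lin : linear_op A) (A_dense : dense_set ip (dom A)).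

Lemma gram_app_inj x x' : dom (gram A) x -> dom (gram A) x' ->
  app (gram A) x = app (gram A) x' -> app A x = app A x'.
Proof.
move=> [Ax Ax_adj] [Ax' Ax'_adj] E.
have {}E : app (adjoint ip A) (app A x) = app (adjoint ip A) (app A x') := E.
have [Axx'_adj adjB] := adjointB A_dense Ax_adj Ax'_adj.
apply/eqP; rewrite -subr_eq0; apply/eqP/ip_eq0.
by rewrite -{1}appB // (adjointP Axx'_adj (domB A_lin Ax Ax')) adjB E subrr ip0r.
Qed.

Lemma kernel_gram x : kernel (gram A) x <-> kernel A x.
Proof.
have [adj0 adj00] := adjoint0 A_dense.
have gram0 : dom (gram A) 0 by split; [exact: dom0 | rewrite app0].
have gram00 : app (adjoint ip A) (app A 0) = 0 by rewrite app0.
split=> [[Ax_gram Ax0]|[Ax Ax0]].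
  split; first by case: Ax_gram.
  by rewrite -(app0 A_lin); apply: gram_app_inj gram0 _; rewrite ?Ax0.
split; first by split; rewrite // Ax0.
exact: etrans (f_equal _ Ax0) adj00.
Qed.

End Gram.

Definition range_on_coim (A : op H) : Prop :=
  forall x, dom A x -> exists2 x', coim ip A x' & app A x' = app A x.

Section MoorePenrose.
Variable A : op H.
Hypothesis A_coim : range_on_coim A.

Lemma mp_invP y : dom (mp_inv ip A) y ->
  coim ip A (app (mp_inv ip A) y) /\
  exists2 y2, orth ip (op_range A) y2 & y = app A (app (mp_inv ip A) y) + y2.
Proof.
move=> [_ [y2 [[x [Ax <-]] [y2_orth ->]]]]; have [x' x'_coim Ax'] := A_coim Ax.
set P := fun x0 => exists y2', coim ip A x0 /\ orth ip (op_range A) y2' /\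
  app A x + y2 = app A x0 + y2'.
have : P (epsilon (inhabits 0) P) by apply: epsilon_spec; exists x', y2; rewrite Ax'.
by case=> y2' [x_coim [y2'_orth E]]; split=> //; exists y2'.
Qed.

Lemma app_mp_inv y y1 y2 : op_range A y1 -> orth ip (op_range A) y2 -> y = y1 + y2 ->
  app A (app (mp_inv ip A) y) = y1.
Proof.
move=> y1_range y2_orth y_eq.
have [|[Ax _] [y2' y2'_orth y_eq']] := mp_invP (y := y); first by exists y1, y2.
apply: (orth_decomp_unique _ y1_range y2'_orth y2_orth); first by exists (app (mp_inv ip A) y).
by rewrite -y_eq' -y_eq.
Qed.

Lemma mp_inv_dom_range y : op_range A y -> dom (mp_inv ip A) y.
Proof.
by move=> y_range; exists y, 0; split; [|split; [move=> ? _; exact: ip0r | rewrite addr0]].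
Qed.

Lemma app_mp_inv_range y : op_range A y -> app A (app (mp_inv ip A) y) = y.
Proof. by move=> y_range; apply: app_mp_inv y_range _ (esym (addr0 y)) => ? _; exact: ip0r. Qed.

End MoorePenrose.

Lemma mp_inv_dom_eq A B y : set_eq (op_range A) (op_range B) ->
  dom (mp_inv ip A) y -> dom (mp_inv ip B) y.
Proof.
move=> AB [y1 [y2 [/AB y1_range [y2_orth y_eq]]]].
by exists y1, y2; split; [|split; first exact: orth_eq y2_orth].
Qed.

Lemma gram_range_on_coim (hc : complete_ip ip) A : linear_op A -> dense_set ip (dom A) ->
  closed_set ip (kernel A) -> range_on_coim (gram A).
Proof.
move=> A_lin A_dense ker_closed x [Ax Ax_adj].
have [n [An An0] xn_orth] := orth_decomp hc (kernel_subspace A_lin) ker_closed x.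
have Axn : app A (x - n) = app A x by rewrite appB // An0 subr0.
exists (x - n); last by rewrite /= Axn.
split; first by split; [exact: domB | rewrite Axn].
by apply: orth_eq xn_orth => z; split=> /kernel_gram; apply.
Qed.

Lemma total_dense D : (forall x, D x) -> dense_set ip D.
Proof.
move=> D_total x; exists (fun _ => x); split=> // e e_gt0; exists 0%N => n _.
by rewrite subrr hnorm_lt // ip0l; exact: exprn_gt0.
Qed.

Section BoundedComp.
Variables (S T : op H).
Hypotheses (hc : complete_ip ip) (S_bounded : bounded_op ip S).
Hypotheses (T_lin : linear_op T) (T_dense : dense_set ip (dom T)).

Local Notation ST := (op_comp S T).
Local Notation Sa := (app (adjoint ip S)).

Lemma bounded_adjointP x y : ip (app S x) y = ip x (Sa y).
Proof. by apply: adjointP; [exact: bounded_adj_dom | case: S_bounded]. Qed.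

Lemma comp_bounded_lin : linear_op ST.
Proof.
have [S_dom [S_lin _]] := S_bounded; have [[T0 domL] _] := T_lin.
split=> [|a x y [Tx _] [Ty _]]; last by rewrite /= (appL T_lin) // (appL S_lin).
by split=> [|a x y [Tx _] [Ty _]]; split=> //; exact: domL.
Qed.

Lemma comp_bounded_dense : dense_set ip (dom ST).
Proof.
move=> x; have [u [Tu ux]] := T_dense x; exists u; split=> // n.
by split; [exact: Tu | case: S_bounded].
Qed.

Lemma adjoint_comp_bounded w : adj_dom ip ST w <-> adj_dom ip T (Sa w).
Proof.
split=> [STw|Tw].
  have [] // := @adjoint_eq T T_dense (Sa w) (app (adjoint ip ST) w) => x Tx.
  by rewrite -bounded_adjointP (adjointP STw) //; split=> //; case: S_bounded.
have [] // := @adjoint_eq ST comp_bounded_dense w (app (adjoint ip T) (Sa w)).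
by move=> x [Tx _]; rewrite /= bounded_adjointP (adjointP Tw).
Qed.

Lemma app_adjoint_comp_bounded w : adj_dom ip T (Sa w) ->
  app (adjoint ip ST) w = app (adjoint ip T) (Sa w).
Proof.
move=> Tw; have [] // := @adjoint_eq ST comp_bounded_dense w (app (adjoint ip T) (Sa w)).
by move=> x [Tx _]; rewrite /= bounded_adjointP (adjointP Tw).
Qed.

End BoundedComp.

Section EPComp.
Variables (S T : op H).
Hypotheses (hc : complete_ip ip) (S_bounded : bounded_op ip S) (S_EP : EP ip S).
Hypotheses (T_lin : linear_op T) (T_dense : dense_set ip (dom T)) (T_closed : closed_op ip T).
Hypothesis ST_range : set_eq (op_range S) (op_range T).

Local Notation ST := (op_comp S T).
Local Notation Sa := (app (adjoint ip S)).
Local Notation M := (op_range S).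

Let S_dom : forall x, dom S x := S_bounded.1.
Let S_lin : linear_op S := S_bounded.2.1.
Let S_dense : dense_set ip (dom S) := total_dense S_dom.
Let Sa_dom y : adj_dom ip S y := bounded_adj_dom S_bounded hc y.

Let gramS_dom z : dom (gram S) z := conj (S_dom z) (Sa_dom _).
Let adjST w : adj_dom ip ST w <-> adj_dom ip T (Sa w) :=
  adjoint_comp_bounded hc S_bounded T_dense w.
Let adjST_app w : adj_dom ip T (Sa w) -> app (adjoint ip ST) w = app (adjoint ip T) (Sa w) :=
  @app_adjoint_comp_bounded S T hc S_bounded T_dense w.

Lemma EP_range_adjoint m : M m <-> exists y, Sa y = m.
Proof.
split=> [/(proj2 S_EP m) [y [_ <-]]|[y <-]]; first by exists y.
by apply/(proj2 S_EP (Sa y)); exists y; split; first exact: Sa_dom.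
Qed.

Lemma EP_range_inj m : M m -> app S m = 0 -> m = 0.
Proof.
case/EP_range_adjoint=> y <- Sm0; apply: ip_eq0.
by rewrite ipC -bounded_adjointP // Sm0 ip0l rmorph0.
Qed.

Lemma EP_orth_range_kernel z : orth ip M z -> app S z = 0.
Proof.
move=> z_orth; apply: ip_eq0; rewrite bounded_adjointP // ipC z_orth ?rmorph0 //.
by apply/EP_range_adjoint; eexists.
Qed.

Lemma EP_orth_range_adj_kernel z : orth ip M z -> Sa z = 0.
Proof.
move=> z_orth; apply: ip_eq0; rewrite -bounded_adjointP // z_orth //.
by exists (Sa z).
Qed.

Lemma EP_range_decomp x : exists2 q, M q & orth ip M (x - q).
Proof.
have [q Mq xq_orth] := orth_decomp hc (range_subspace S_lin) (proj1 S_EP) x.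
by exists q.
Qed.

(* [S^*] and [S] vanish on [M^⊥], so each maps [M] onto itself. *)
Lemma EP_range_gramS_T m : M m -> exists2 x, dom T x & Sa (app S (app T x)) = m.
Proof.
case/EP_range_adjoint=> y <-.
have [p [x1 [_ <-]] yp_orth] := EP_range_decomp y.
have [q Mq x1q_orth] := EP_range_decomp x1.
have [x [Tx Txq]] := proj1 (ST_range q) Mq.
exists x; rewrite // Txq.
have Sq : app S q = app S x1.
  by apply/eqP; rewrite eq_sym -subr_eq0 -appB // EP_orth_range_kernel.
have [_ SaB] := adjointB S_dense (Sa_dom y) (Sa_dom (app S x1)).
by apply/eqP; rewrite Sq eq_sym -subr_eq0 -SaB EP_orth_range_adj_kernel.
Qed.

Lemma kernel_ST x : kernel ST x <-> kernel T x.
Proof.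
split=> [[[Tx _] STx0]|[Tx Tx0]]; last by split; rewrite //= Tx0 app0.
by split=> //; apply: EP_range_inj STx0; apply/(ST_range _); exists x.
Qed.

Lemma range_gram_ST : set_eq (op_range (gram ST)) (op_range (gram T)).
Proof.
move=> y; split=> [[x [[[Tx _] /adjST STx_adj] <-]]|[x [[Tx Tx_adj] <-]]].
  have /(ST_range _) [x' [Tx' Tx'E]] : M (Sa (app S (app T x))).
    by apply/EP_range_adjoint; eexists.
  exists x'; split; first by split; rewrite // Tx'E.
  exact: etrans (f_equal _ Tx'E) (esym (adjST_app STx_adj)).
have [x' Tx' E] := EP_range_gramS_T (proj2 (ST_range _) (ex_intro _ x (conj Tx erefl))).
have STx'_adj : adj_dom ip T (Sa (app S (app T x'))) by rewrite E.
exists x'; split; first by split; [split | apply/adjST].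
exact: etrans (adjST_app STx'_adj) (f_equal _ E).
Qed.

Lemma EP_range_sub_gramS_range m : M m -> op_range (gram S) m.
Proof.
by case/EP_range_gramS_T=> x Tx <-; exists (app T x).
Qed.

Let gramT_coim : range_on_coim (gram T) :=
  gram_range_on_coim hc T_lin T_dense (closed_op_kernel_closed T_closed).

Let gramST_coim : range_on_coim (gram ST).
Proof.
have ker_closed : closed_set ip (kernel ST).
  exact: closed_set_eq (fun x => iff_sym (kernel_ST x)) (closed_op_kernel_closed T_closed).
have := gram_range_on_coim hc (comp_bounded_lin S_bounded T_lin).
by move/(_ (comp_bounded_dense S_bounded T_dense) ker_closed).
Qed.

Let gramS_coim : range_on_coim (gram S) :=
  gram_range_on_coim hc S_lin S_dense (bounded_kernel_closed S_bounded).

Lemma cdual_comp_dom y : dom (cdual ip ST) y <-> dom (op_comp (cdual ip S) (cdual ip T)) y.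
Proof.
split=> [[B_dom _]|[[A_dom _] _]].
  have A_dom := mp_inv_dom_eq range_gram_ST B_dom.
  have [[[Tv _] _] _] := mp_invP gramT_coim A_dom.
  split; first by split.
  split; last exact: S_dom.
  apply: mp_inv_dom_range; apply: EP_range_sub_gramS_range; apply/(ST_range _).
  by eexists; split; first exact: Tv.
have B_dom := mp_inv_dom_eq (fun z => iff_sym (range_gram_ST z)) A_dom.
by have [[[STu _] _] _] := mp_invP gramST_coim B_dom.
Qed.

Lemma cdual_comp_app y : dom (cdual ip ST) y ->
  app (cdual ip ST) y = app (op_comp (cdual ip S) (cdual ip T)) y.
Proof.
move=> [B_dom _]; have A_dom := mp_inv_dom_eq range_gram_ST B_dom.
move: (mp_invP gramST_coim B_dom) (mp_invP gramT_coim A_dom).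
rewrite /=; set u := app (mp_inv ip (gram ST)) y; set v := app (mp_inv ip (gram T)) y.
move=> [[[[Tu _] /adjST STu_adj] _] _] [[[Tv Tv_adj] _] _].
have gram_uv : app (gram ST) u = app (gram T) v.
  case: B_dom => y1 [y2 [y1_range [y2_orth y_eq]]].
  rewrite (app_mp_inv gramST_coim y1_range y2_orth y_eq).
  have y2_orth' := orth_eq range_gram_ST y2_orth.
  by rewrite (app_mp_inv gramT_coim (proj1 (range_gram_ST _) y1_range) y2_orth' y_eq).
(* [S^*S (Tu) = Tu'] for some [u'], and [T^*T u' = (ST)^*(ST) u = T^*T v]. *)
have gramS_Tu : app (gram S) (app T u) = app T v.
  have /(ST_range _) [u' [Tu' Tu'E]] : M (Sa (app S (app T u))).
    by apply/EP_range_adjoint; eexists.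
  transitivity (app T u'); first by rewrite Tu'E.
  apply: (gram_app_inj T_lin T_dense); first by split; rewrite // Tu'E.
    by split.
  exact: etrans (f_equal (app (adjoint ip T)) Tu'E) (etrans (esym (adjST_app STu_adj)) gram_uv).
set p := app (mp_inv ip (gram S)) (app T v).
have gramS_p : app (gram S) p = app T v.
  apply: (app_mp_inv_range gramS_coim); apply: EP_range_sub_gramS_range; apply/(ST_range _).
  by exists v.
exact (gram_app_inj S_lin S_dense (gramS_dom _) (gramS_dom _) (etrans gramS_Tu (esym gramS_p))).
Qed.

End EPComp.

End InnerProduct.

Theorem theorem2p21 (R : realType) (H : lmodType R[i]) (ip : H -> H -> R[i])
  (HH : is_Hilbert ip) (T S : op H) :
  densely_defined ip T -> closed_op ip T -> closed_range ip T ->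
  bounded_op ip S -> EP ip S ->
  set_eq (op_range S) (op_range T) ->
  op_eq (cdual ip (op_comp S T)) (op_comp (cdual ip S) (cdual ip T)).
Proof.
case: HH => hip hc [T_lin T_dense] T_closed _ S_bounded S_EP ST_range.
split.
  exact (cdual_comp_dom hip hc S_bounded S_EP T_lin T_dense T_closed ST_range).
exact (cdual_comp_app hip hc S_bounded S_EP T_lin T_dense T_closed ST_range).
Qed.
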